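(* Let $F=\prod_iF_i$ be a product of fields, $G$ a group acting on $F$ by ring automorphisms such that $G$ acts transitively on the principal idempotents of $F$, and $H\le G$ a subgroup such that $G$ stabilises $L:=F^H$. Then: (1) the functor $F\otimes_L-\colon\mathrm{Rep}^H_L(G)\to\mathrm{Rep}_F(G)$ (diagonal $G$-action) is exact, monoidal and fully faithful; (2) if $H$ is normal in $G$, its essential image is the full subcategory of $V\in\mathrm{Rep}_F(G)$ with $F\cdot V^H=V$, and on this subcategory $(-)^H\colon\mathrm{Rep}_F(G)\to\mathrm{Rep}^H_L(G)$ is a quasi-inverse to $F\otimes_L-$; (3) the essential image of $F\otimes_L-$ is closed under subquotients.
   Context: For a group $G$ acting on a ring $R$ and a subgroup $H$, $\mathrm{Rep}_R(G)$ is the category of modules over the skew group ring $R\rtimes G$ that are free of finite rank over $R$, and $\mathrm{Rep}^H_R(G)$ is its full subcategory of modules $V$ with $R\cdot V^H=V$. The principal idempotents of $F=\prod_iF_i$ are the coordinate idempotents. *)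

From HB Require Import structures.
From mathcomp Require Import all_boot all_order all_algebra.
From mathcomp Require Import monoid.
From mathcomp.real_closed Require Import mxtens.

Set Implicit Arguments.
Unset Strict Implicit.
Unset Printing Implicit Defensive.

Import GRing.Theory.
Local Open Scope ring_scope.

(* A subring R of F (R = F or R = L = F^H) is encoded by a predicate P on F.  *)
(* An object of Rep_R(G) (an R#G-module free of finite rank over R) is, after *)
(* choosing an R-basis, R^n with a semilinear G-action; every such action is  *)
(*     g . v = rho g *m (g v)       (g v = g applied entrywise)               *)
(* for a unique "cocycle" rho : G -> 'M_n with entries in R, rho 1 = 1 and    *)
(* rho (g*h) = rho g *m g(rho h).  Morphisms are R-matrices commuting with    *)
(* the G-actions.                                                             *)

Section RepModel.

Variables (F : comPzRingType) (G : groupType) (act : G -> {rmorphism F -> F}).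

Definition mx_in (P : F -> Prop) m n (A : 'M[F]_(m, n)) : Prop :=
  forall i j, P (A i j).

Definition gact n (rho : G -> 'M[F]_n) (g : G) (v : 'cV[F]_n) : 'cV[F]_n :=
  rho g *m map_mx (act g) v.

Definition is_rep (P : F -> Prop) n (rho : G -> 'M[F]_n) : Prop :=
  [/\ forall g, mx_in P (rho g),
      rho 1%g = 1%:M &
      forall g h, rho (g * h)%g = rho g *m map_mx (act g) (rho h)].

Definition is_hom (P : F -> Prop) n m (rho : G -> 'M[F]_n) (tau : G -> 'M[F]_m)
    (A : 'M[F]_(m, n)) : Prop :=
  mx_in P A /\ forall g v, A *m gact rho g v = gact tau g (A *m v).

Definition is_invariant (P : F -> Prop) (Hs : G -> Prop) n (rho : G -> 'M[F]_n)
    (v : 'cV[F]_n) : Prop :=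
  mx_in P v /\ forall h, Hs h -> gact rho h v = v.

Definition spanned_by_invariants (P : F -> Prop) (Hs : G -> Prop) n
    (rho : G -> 'M[F]_n) : Prop :=
  forall v : 'cV[F]_n, mx_in P v ->
    exists k (c : 'I_k -> F) (w : 'I_k -> 'cV[F]_n),
      [/\ forall j, P (c j),
          forall j, is_invariant P Hs rho (w j) &
          v = \sum_(j < k) c j *: w j].

Definition allF : F -> Prop := fun _ => True.

Definition fixedL (Hs : G -> Prop) : F -> Prop :=
  fun x => forall h, Hs h -> act h x = x.

Definition RepF n (rho : G -> 'M[F]_n) : Prop := is_rep allF rho.

Definition RepHL (Hs : G -> Prop) n (rho : G -> 'M[F]_n) : Prop :=
  is_rep (fixedL Hs) rho /\ spanned_by_invariants (fixedL Hs) Hs rho.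

(* With the basis 1 (x) e_j of F (x)_L L^n = F^n, the diagonal action
   g (f (x) v) = g(f) (x) rho g (g v) becomes f v |-> rho g *m g(f v): the same
   cocycle, now regarded over F; on morphisms it is the same matrix. *)
Definition ext_obj n (rho : G -> 'M[F]_n) : G -> 'M[F]_n := rho.
Definition ext_hom m n (A : 'M[F]_(m, n)) : 'M[F]_(m, n) := A.

Definition isoF n m (rho : G -> 'M[F]_n) (tau : G -> 'M[F]_m) : Prop :=
  exists (A : 'M[F]_(m, n)) (B : 'M[F]_(n, m)),
    [/\ is_hom allF rho tau A, is_hom allF tau rho B,
        A *m B = 1%:M & B *m A = 1%:M].

Definition ess_image (Hs : G -> Prop) n (rho : G -> 'M[F]_n) : Prop :=
  exists m (tau : G -> 'M[F]_m), RepHL Hs tau /\ isoF (ext_obj tau) rho.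

Definition exact_at (P : F -> Prop) n1 n2 n3
    (A : 'M[F]_(n2, n1)) (B : 'M[F]_(n3, n2)) : Prop :=
  forall v : 'cV[F]_n2, mx_in P v ->
    (B *m v = 0 <-> exists u : 'cV[F]_n1, mx_in P u /\ v = A *m u).

Definition invariant_basis (Hs : G -> Prop) n (rho : G -> 'M[F]_n) m
    (b : 'M[F]_(n, m)) : Prop :=
  (forall j, is_invariant allF Hs rho (col j b)) /\
  forall v, is_invariant allF Hs rho v ->
    exists! c : 'cV[F]_m, mx_in (fixedL Hs) c /\ v = b *m c.

End RepModel.

(* F = prod_i K_i is von Neumann regular: every x has a quasi-inverse x'
   (x x' x = x, x' x x' = x') computed coordinatewise, which is unique and so
   commutes with every ring endomorphism; the idempotent x x' records the
   coordinates where x is nonzero.  An object of Rep^H_L(G) is exactly an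
   L-valued cocycle that is trivial on H, which gives full faithfulness, the
   monoidal structure and the invariants of F (x)_L W at once.  Exactness: the
   maximal minors of an L-matrix B that are nonsingular at a coordinate i give
   an L-matrix Z acting on ker B as a unit scalar at i, and an idempotent of L
   that is 1 at i moves the columns of Z into ker B over L, i.e. into im A.
   Conversely V lies in the essential image as soon as it has an F-basis b of
   H-invariant vectors whose conjugated cocycle b^-1 rho(g) g(b) is L-valued.
   Such a basis is cut out of an invariant generating family by choosing at
   each coordinate the first nonvanishing maximal minor; this choice depends
   only on which minors vanish, so it is compatible with the action.  For H
   normal the conjugated cocycle is automatically H-fixed; for a subobject or a
   quotient of F (x)_L W it factors through the L-valued cocycle of W. *)

From HB Require Import structures.
From mathcomp Require Import all_boot all_order all_algebra.
From mathcomp Require Import monoid.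
From mathcomp.real_closed Require Import mxtens.
From mathcomp Require Import ring.
From Stdlib Require Import ClassicalEpsilon.

Set Implicit Arguments.
Unset Strict Implicit.
Unset Printing Implicit Defensive.

Import GRing.Theory.
Local Open Scope ring_scope.

Lemma dep_functional_choice (I : Type) (T : I -> Type) (P : forall i, T i -> Prop) :
  (forall i, exists x, P i x) -> exists f : forall i, T i, forall i, P i (f i).
Proof.
move=> ex; exists (fun i => proj1_sig (constructive_indefinite_description _ (ex i))).
by move=> i; exact: proj2_sig.
Qed.

Lemma quasi_inverse_uniq (R : comPzRingType) (x y z : R) :
  x * y * x = x -> y * x * y = y -> x * z * x = x -> z * x * z = z -> y = z.
Proof.
move=> xyx yxy xzx zxz.
have e1 : x * y * x * z * y = y * (x * z * x) * y by ring.
have e2 : x * z * x * y * z = z * (x * y * x) * z by ring.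
rewrite xyx xzx yxy in e1; rewrite xzx xyx zxz in e2.
by rewrite -[LHS]e1 -[RHS]e2 mulrAC.
Qed.

Lemma eq_col_mx (R : Type) m n (A B : 'M[R]_(m, n)) :
  (forall j, col j A = col j B) -> A = B.
Proof. by move=> eAB; apply/matrixP => a j; move/matrixP/(_ a 0): (eAB j); rewrite !mxE. Qed.

Lemma mulmx_sum_col (R : comPzRingType) m n (M : 'M[R]_(m, n)) (u : 'cV[R]_n) :
  M *m u = \sum_j u j 0 *: col j M.
Proof.
apply/matrixP => a b; rewrite ord1 !mxE summxE; apply: eq_bigr => j _.
by rewrite !mxE mulrC.
Qed.

Lemma tensmx11 (R : comPzRingType) m n :
  (1%:M : 'M[R]_m) *t (1%:M : 'M[R]_n) = 1%:M.
Proof.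
apply/matrixP => x y.
case: (mxtens_indexP x) => x1 x2; case: (mxtens_indexP y) => y1 y2.
rewrite tensmxE !mxE (inj_eq (can_inj (@mxtens_indexK _ _))) xpair_eqE.
by rewrite -natrM mulnb.
Qed.

Lemma rank_factorization (K : fieldType) m n (B : 'M[K]_(m, n)) :
  exists (S : 'I_(\rank B) -> 'I_m) (T : 'I_(\rank B) -> 'I_n),
    mxsub S T B \in unitmx /\ B = colsub T B *m invmx (mxsub S T B) *m rowsub S B.
Proof.
set S := maxrankfun B; set R := rowsub S B.
have [T uT] : exists T : 'I_(\rank B) -> 'I_n, rowsub T R^T \in unitmx.
  have rR : \rank R^T = \rank B by rewrite mxrank_tr; apply/eqP; exact: maxrowsub_free.
  move: (maxrankfun R^T) (maxrowsub_free R^T); rewrite rR => T frT.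
  by exists (fun x => T x); rewrite -row_free_unit.
have eST : mxsub S T B = (rowsub T R^T)^T by apply/matrixP => a b; rewrite !mxE.
have uST : mxsub S T B \in unitmx by rewrite eST unitmx_tr.
exists S, T; split => //.
have /submxP [Y eY] : (B <= R)%MS by rewrite /R /S eq_maxrowsub.
have -> : colsub T B = Y *m mxsub S T B.
  rewrite (congr1 (colsub T) eY) -mulmx_colsub; congr (_ *m _).
  by apply/matrixP => a b; rewrite !mxE.
by rewrite mulmxK.
Qed.

(* When mxsub S T B is a nonsingular maximal minor, this is
   \det (mxsub S T B) *: (P - 1) for a projection P with kernel ker B. *)
Definition minor_kernel (R : comPzRingType) m n r (S : 'I_r -> 'I_m)
    (T : 'I_r -> 'I_n) (B : 'M[R]_(m, n)) : 'M[R]_n :=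
  colsub T 1%:M *m \adj (mxsub S T B) *m rowsub S B - (\det (mxsub S T B))%:M.

Lemma map_minor_kernel (R R' : comPzRingType) (f : {rmorphism R -> R'}) m n r
    (S : 'I_r -> 'I_m) (T : 'I_r -> 'I_n) (B : 'M[R]_(m, n)) :
  map_mx f (minor_kernel S T B) = minor_kernel S T (map_mx f B).
Proof.
rewrite /minor_kernel map_mxB map_scalar_mx !map_mxM map_mx_adj -det_map_mx.
by rewrite !map_mxsub map_mx1.
Qed.

Lemma minor_kernel_ker (R : comPzRingType) m n r (S : 'I_r -> 'I_m)
    (T : 'I_r -> 'I_n) (B : 'M[R]_(m, n)) (v : 'cV_n) :
  B *m v = 0 -> minor_kernel S T B *m v = - \det (mxsub S T B) *: v.
Proof.
move=> Bv; rewrite mulmxBl -mulmxA mul_rowsub_mx Bv mul_scalar_mx scaleNr.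
suff -> : rowsub S (0 : 'cV[R]_m) = 0 by rewrite !mulmx0 sub0r.
by apply/matrixP => a b; rewrite !mxE.
Qed.

Lemma exists_minor_kernel (K : fieldType) m n (B : 'M[K]_(m, n)) :
  exists r (S : 'I_r -> 'I_m) (T : 'I_r -> 'I_n),
    \det (mxsub S T B) != 0 /\ B *m minor_kernel S T B = 0.
Proof.
have [S [T [uBs eB]]] := rank_factorization B.
exists (\rank B), S, T; split; first by rewrite -unitfE -unitmxE.
have adjE : \adj (mxsub S T B) = \det (mxsub S T B) *: invmx (mxsub S T B).
  by rewrite /invmx uBs scalerA mulfV ?scale1r // -unitfE -unitmxE.
rewrite mulmxBr mul_mx_scalar !mulmxA mulmx_colsub mulmx1 adjE -scalemxAr -scalemxAl.
by rewrite -eB subrr.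
Qed.

Section ProductOfFields.
Variables (F : comPzRingType) (I : Type) (K : I -> fieldType)
  (pi : forall i : I, {rmorphism F -> K i}).
Hypothesis pi_inj : forall x : F, (forall i, pi i x = 0) -> x = 0.
Hypothesis pi_surj : forall y : (forall i, K i), exists x : F, forall i, pi i x = y i.

Local Notation pm i A := (map_mx (pi i) A).

Lemma coord_inj x y : (forall i, pi i x = pi i y) -> x = y.
Proof.
move=> e; apply/eqP; rewrite -subr_eq0; apply/eqP/pi_inj => i.
by rewrite rmorphB /= e subrr.
Qed.

Lemma coord_mx_inj m n (A B : 'M[F]_(m, n)) : (forall i, pm i A = pm i B) -> A = B.
Proof.
move=> e; apply/matrixP => a b; apply: coord_inj => i.
by move/matrixP/(_ a b): (e i); rewrite !mxE.
Qed.

Lemma glue_mx m n (u : forall i, 'M[K i]_(m, n)) :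
  exists U : 'M[F]_(m, n), forall i, pm i U = u i.
Proof.
have /fin_all_exists [x hx] :
    forall ab : 'I_m * 'I_n, exists x : F, forall i, pi i x = u i ab.1 ab.2.
  by move=> ab; exact: pi_surj.
by exists (\matrix_(a, b) x (a, b)) => i; apply/matrixP => a b; rewrite !mxE hx.
Qed.

(* With 0^-1 = 0 in each K i this is the quasi-inverse of x. *)
Definition qinv (x : F) : F :=
  proj1_sig (constructive_indefinite_description _ (pi_surj (fun i => (pi i x)^-1))).

Lemma qinvE i x : pi i (qinv x) = (pi i x)^-1.
Proof. by rewrite /qinv; case: constructive_indefinite_description => y /= ->. Qed.

Lemma mul_qinvK x : x * qinv x * x = x.
Proof.
apply: coord_inj => i; rewrite !rmorphM /= qinvE.
by have [->|nz] := eqVneq (pi i x) 0; rewrite ?mulr0 // mulfV // mul1r.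
Qed.

Lemma qinv_mulK x : qinv x * x * qinv x = qinv x.
Proof.
apply: coord_inj => i; rewrite !rmorphM /= qinvE.
by have [->|nz] := eqVneq (pi i x) 0; rewrite ?invr0 ?mul0r // mulVf // mul1r.
Qed.

Lemma rmorph_qinv (f : {rmorphism F -> F}) x : f (qinv x) = qinv (f x).
Proof.
apply: (@quasi_inverse_uniq _ (f x)); rewrite ?mul_qinvK ?qinv_mulK //.
  by rewrite -!rmorphM mul_qinvK.
by rewrite -!rmorphM qinv_mulK.
Qed.

Definition coord_unit (x : F) := forall i, pi i x != 0.

Lemma mulr_qinv x : coord_unit x -> x * qinv x = 1.
Proof. by move=> ux; apply: coord_inj => i; rewrite rmorphM rmorph1 /= qinvE mulfV ?ux. Qed.

Definition supp (x : F) := x * qinv x.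

Lemma suppE i x : pi i (supp x) = (pi i x != 0)%:R.
Proof.
rewrite rmorphM /= qinvE.
by have [->|nz] := eqVneq (pi i x) 0; rewrite ?mul0r // mulfV.
Qed.

Lemma rmorph_supp (f : {rmorphism F -> F}) x : f (supp x) = supp (f x).
Proof. by rewrite rmorphM /= rmorph_qinv. Qed.

Lemma supp_mulr_unit x y : coord_unit y -> supp (x * y) = supp x.
Proof.
move=> uy; apply: coord_inj => i; rewrite !suppE rmorphM /=.
by rewrite mulf_eq0 (negPf (uy i)) orbF.
Qed.

Lemma coord_unit_det n (X Y : 'M[F]_n) : X *m Y = 1%:M -> coord_unit (\det X).
Proof.
move/(congr1 determinant); rewrite det_mulmx det1 => e i; apply/eqP => z.
have := congr1 (pi i) e; rewrite rmorphM rmorph1 /= z mul0r => /eqP.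
by rewrite eq_sym oner_eq0.
Qed.

Lemma mx_rinv_of_unit_det n (X : 'M[F]_n) :
  coord_unit (\det X) -> exists Y, X *m Y = 1%:M.
Proof.
move=> uX; exists (qinv (\det X) *: \adj X).
by rewrite -scalemxAr mul_mx_adj scale_scalar_mx mulrC mulr_qinv.
Qed.

Lemma rank_coord_inj m k (N : 'M[F]_(m, k)) :
  (forall u : 'cV_k, N *m u = 0 -> u = 0) -> forall i, \rank (pm i N) = k.
Proof.
move=> inj i.
have [U hU] := glue_mx (fun i => (kermx (pm i N)^T)^T).
have NU : N *m U = 0.
  apply: coord_mx_inj => j; rewrite map_mxM hU map_mx0.
  by apply/trmx_inj; rewrite trmx_mul trmxK mulmx_ker trmx0.
have U0 : U = 0.
  apply: eq_col_mx => b; rewrite col0; apply: inj.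
  by rewrite colE mulmxA NU mul0mx.
have := hU i; rewrite U0 map_mx0 => /(congr1 trmx); rewrite trmxK trmx0 => /esym/eqP.
by rewrite kermx_eq0 -mxrank_tr => /eqP.
Qed.

Definition minor_det m k (N : 'M[F]_(m, k)) (T : {ffun 'I_k -> 'I_m}) : F :=
  \det (rowsub T N).

(* At each coordinate, first_minor N is the indicator of the first T (in
   enum_rank order) whose minor does not vanish there: it only depends on
   which minors vanish. *)
Definition first_minor m k (N : 'M[F]_(m, k)) (T : {ffun 'I_k -> 'I_m}) : F :=
  supp (minor_det N T) *
  \prod_(T' | (enum_rank T' < enum_rank T)%N) (1 - supp (minor_det N T')).

Definition minor_select m k (N : 'M[F]_(m, k)) : 'M[F]_(k, m) :=
  \sum_T first_minor N T *: rowsub T 1%:M.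

Lemma map_minor_select (f : {rmorphism F -> F}) m k (N : 'M[F]_(m, k)) :
  map_mx f (minor_select N) = minor_select (map_mx f N).
Proof.
have fdet T : f (minor_det N T) = minor_det (map_mx f N) T.
  by rewrite /minor_det -det_map_mx map_mxsub.
apply/matrixP => a b; rewrite mxE !summxE rmorph_sum; apply: eq_bigr => T _.
rewrite !mxE rmorphM rmorph_nat /= rmorphM rmorph_prod /= rmorph_supp fdet.
congr (_ * _ * _); apply: eq_bigr => T' _.
by rewrite rmorphB rmorph1 /= rmorph_supp fdet.
Qed.

Lemma minor_select_mulmx m k (N : 'M[F]_(m, k)) (s : 'M[F]_k) :
  coord_unit (\det s) -> minor_select (N *m s) = minor_select N.
Proof.
move=> us; have e T : supp (minor_det (N *m s) T) = supp (minor_det N T).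
  by rewrite /minor_det -mul_rowsub_mx det_mulmx supp_mulr_unit.
rewrite /minor_select /first_minor; apply: eq_bigr => T _; rewrite e.
by congr (_ * _ *: _); apply: eq_bigr => T' _; rewrite e.
Qed.

Lemma coord_minor_select i m k (N : 'M[F]_(m, k)) : \rank (pm i N) = k ->
  exists T0, pi i (minor_det N T0) != 0 /\ pm i (minor_select N) = rowsub T0 1%:M.
Proof.
move=> rk; pose nz T := pi i (minor_det N T) != 0.
have [T1 nzT1] : exists T1, nz T1.
  move: (maxrankfun (pm i N)) (maxrowsub_free (pm i N)); rewrite rk => T frT.
  exists (finfun T); rewrite /nz /minor_det -det_map_mx -unitfE -unitmxE.
  rewrite -row_free_unit map_mxsub.
  by congr (row_free _): frT; apply/matrixP => a b; rewrite !mxE ffunE.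
have [T0 nzT0 minT0] := arg_minnP (fun T => val (enum_rank T)) nzT1.
exists T0; split => //.
have weight T : pi i (first_minor N T) = (T == T0)%:R.
  rewrite rmorphM rmorph_prod /= suppE -/(nz T).
  have [-> | neT] := eqVneq T T0.
    rewrite nzT0 mul1r big1 // => T' lt; rewrite rmorphB rmorph1 /= suppE -/(nz T').
    by case nzT': (nz T'); rewrite ?subr0 //; move: (minT0 _ nzT'); rewrite leqNgt lt.
  case nzT: (nz T); last by rewrite mul0r.
  have lt : (enum_rank T0 < enum_rank T)%N.
    rewrite ltn_neqAle minT0 // andbT; apply: contra neT => /eqP e.
    by apply/eqP/enum_rank_inj/val_inj.
  rewrite (bigD1 T0) //= rmorphB /= suppE -/(nz T0) nzT0.
  by rewrite -[true%:R]/(1 : K i) (rmorph1 (pi i)) subrr mul0r mulr0.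
apply/matrixP => a b; rewrite mxE summxE rmorph_sum (bigD1 T0) //= big1 => [|T neT].
  by rewrite !mxE rmorphM /= weight eqxx mul1r addr0 rmorph_nat.
by rewrite !mxE rmorphM /= weight (negPf neT) mul0r.
Qed.

Lemma unit_det_minor_select m k (N : 'M[F]_(m, k)) :
  (forall i, \rank (pm i N) = k) -> coord_unit (\det (minor_select N *m N)).
Proof.
move=> rk i; have [T0 [nz e]] := coord_minor_select (rk i).
by rewrite -det_map_mx map_mxM e mul_rowsub_mx mul1mx -map_mxsub det_map_mx.
Qed.

Definition zero_locus m n (Y : 'M[F]_(m, n)) : F :=
  \prod_a \prod_b (1 - supp (Y a b)).

Lemma zero_locusZ m n (Y : 'M[F]_(m, n)) : zero_locus Y *: Y = 0.
Proof.
apply/matrixP => a b; rewrite !mxE /zero_locus (bigD1 a) //= (bigD1 b) //=.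
have kill : (1 - supp (Y a b)) * Y a b = 0 by rewrite mulrBl mul1r mul_qinvK subrr.
by rewrite mulrAC [X in X * _]mulrAC kill !mul0r.
Qed.

Lemma coord_zero_locus i m n (Y : 'M[F]_(m, n)) : pm i Y = 0 -> pi i (zero_locus Y) = 1.
Proof.
move=> /matrixP Y0; rewrite rmorph_prod big1 // => a _; rewrite rmorph_prod big1 // => b _.
by rewrite rmorphB rmorph1 /= suppE; move: (Y0 a b); rewrite !mxE => ->; rewrite eqxx subr0.
Qed.

Lemma rmorph_zero_locus (f : {rmorphism F -> F}) m n (Y : 'M[F]_(m, n)) :
  f (zero_locus Y) = zero_locus (map_mx f Y).
Proof.
rewrite rmorph_prod; apply: eq_bigr => a _; rewrite rmorph_prod; apply: eq_bigr => b _.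
by rewrite rmorphB rmorph1 /= rmorph_supp mxE.
Qed.

Section Action.
Variables (G : groupType) (act : G -> {rmorphism F -> F}) (H : G -> Prop).

Local Notation L := (fixedL act H).
Local Notation allF := (@allF F).
Local Notation actm g A := (map_mx (act g) A).

Definition fixed_mx m n (A : 'M[F]_(m, n)) := forall h, H h -> actm h A = A.

Lemma fixed_mxP m n (A : 'M[F]_(m, n)) : mx_in L A <-> fixed_mx A.
Proof.
split => [AL h Hh | fA a b h Hh]; first by apply/matrixP => a b; rewrite mxE AL.
by move/matrixP/(_ a b): (fA h Hh); rewrite mxE.
Qed.

Lemma fixed_mxM m n p (A : 'M[F]_(m, n)) (B : 'M[F]_(n, p)) :
  fixed_mx A -> fixed_mx B -> fixed_mx (A *m B).
Proof. by move=> fA fB h Hh; rewrite map_mxM fA ?fB. Qed.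

Lemma actm_delta g m n (a : 'I_m) (b : 'I_n) : actm g (delta_mx a b) = delta_mx a b.
Proof. by apply/matrixP => x y; rewrite !mxE rmorph_nat. Qed.

Lemma delta_mx_fixedL m n (a : 'I_m) (b : 'I_n) : mx_in L (delta_mx a b).
Proof. by apply/fixed_mxP => h _; exact: actm_delta. Qed.

Lemma fixed_mx_col m n (A : 'M[F]_(m, n)) j : fixed_mx A -> fixed_mx (col j A).
Proof.
by move=> fA; rewrite colE; apply: fixed_mxM => //; apply/fixed_mxP/delta_mx_fixedL.
Qed.

Lemma exact_lift_fixed n1 n2 n3 p (A : 'M[F]_(n2, n1)) (B : 'M[F]_(n3, n2))
    (X : 'M[F]_(n2, p)) :
  exact_at L A B -> fixed_mx X -> B *m X = 0 -> exists U, X = A *m U.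
Proof.
move=> ex fX BX.
have /fin_all_exists [u hu] : forall j, exists u, col j X = A *m u.
  move=> j; have cL : mx_in L (col j X) by apply/fixed_mxP; exact: fixed_mx_col.
  have [u [_ ->]] : exists u, mx_in L u /\ col j X = A *m u.
    by apply/(ex _ cL).1; rewrite colE mulmxA BX mul0mx.
  by exists u.
exists (\matrix_(a, j) u j a 0); apply: eq_col_mx => j.
by rewrite hu colE -mulmxA -colE; congr (_ *m _); apply/matrixP => a b; rewrite !mxE ord1.
Qed.

Lemma exact_ext_coord n1 n2 n3 (A : 'M[F]_(n2, n1)) (B : 'M[F]_(n3, n2))
    (v : 'cV[F]_n2) :
  fixed_mx B -> exact_at L A B -> B *m v = 0 ->
  forall i, exists u, pm i v = pm i A *m u.
Proof.
move=> fB ex Bv i.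
have [r [S [T [nzdet BZ]]]] := exists_minor_kernel (pm i B).
set Z := minor_kernel S T B.
have piZ : pm i Z = minor_kernel S T (pm i B) by exact: map_minor_kernel.
(* B *m Z need not vanish away from coordinate i; scaling Z by the zero locus
   of B *m Z turns its columns into L-vectors of ker B without changing it at i. *)
set e := zero_locus (B *m Z).
have fZ : fixed_mx Z by move=> h Hh; rewrite map_minor_kernel fB.
have feZ : fixed_mx (e *: Z).
  by move=> h Hh; rewrite map_mxZ rmorph_zero_locus fixed_mxM ?fZ.
have BeZ : B *m (e *: Z) = 0 by rewrite -scalemxAr zero_locusZ.
have [U eZ] := exact_lift_fixed ex feZ BeZ.
have pie : pi i e = 1 by apply: coord_zero_locus; rewrite map_mxM piZ.
have piZU : pm i Z = pm i A *m pm i U.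
  by rewrite -map_mxM -eZ map_mxZ pie scale1r.
set d := pi i (\det (mxsub S T B)).
have nzd : d != 0 by rewrite /d -det_map_mx map_mxsub.
exists (- d^-1 *: (pm i U *m pm i v)).
have Zv : pm i Z *m pm i v = - d *: pm i v.
  rewrite piZ minor_kernel_ker; last by rewrite -map_mxM Bv map_mx0.
  by rewrite /d -det_map_mx map_mxsub.
by rewrite -scalemxAr mulmxA -piZU Zv scalerA mulrNN mulVf // scale1r.
Qed.

Lemma exact_at_ext n1 n2 n3 (A : 'M[F]_(n2, n1)) (B : 'M[F]_(n3, n2)) :
  mx_in L A -> mx_in L B -> exact_at L A B -> exact_at allF A B.
Proof.
move=> /fixed_mxP fA /fixed_mxP fB ex.
have BA : B *m A = 0.
  apply: eq_col_mx => j; rewrite col0 colE -mulmxA; apply/(ex _ _).2.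
    by apply/fixed_mxP; rewrite -colE; exact: fixed_mx_col.
  by exists (delta_mx j 0); split => //; exact: delta_mx_fixedL.
move=> v _; split => [Bv | [u [_ ->]]]; last by rewrite mulmxA BA mul0mx.
have /dep_functional_choice [u hu] := exact_ext_coord fB ex Bv.
have [U hU] := glue_mx u.
by exists U; split => //; apply: coord_mx_inj => i; rewrite map_mxM hU.
Qed.

Hypothesis act1 : forall x, act 1%g x = x.
Hypothesis actM : forall g h x, act (g * h)%g x = act g (act h x).

Lemma actmM g h m n (A : 'M[F]_(m, n)) : actm g (actm h A) = actm (g * h)%g A.
Proof. by apply/matrixP => a b; rewrite !mxE actM. Qed.

Lemma actm1 m n (A : 'M[F]_(m, n)) : actm 1%g A = A.
Proof. by apply/matrixP => a b; rewrite !mxE act1. Qed.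

Lemma is_homP P n m (r1 : G -> 'M[F]_n) (r2 : G -> 'M[F]_m) (A : 'M[F]_(m, n)) :
  is_hom act P r1 r2 A <-> mx_in P A /\ forall g, A *m r1 g = r2 g *m actm g A.
Proof.
split=> [[PA hA] | [PA hA]]; split=> //.
  move=> g; apply: eq_col_mx => j; rewrite !colE.
  by have := hA g (delta_mx j 0); rewrite /gact map_mxM actm_delta !mulmxA.
by move=> g v; rewrite /gact mulmxA hA -mulmxA map_mxM.
Qed.

Lemma is_rep_inv P n (r : G -> 'M[F]_n) g :
  is_rep act P r -> r g *m actm g (r g^-1)%g = 1%:M.
Proof. by case=> _ r1 rM; rewrite -rM mulgV r1. Qed.

Lemma is_hom_comp n m p (r1 : G -> 'M[F]_n) (r2 : G -> 'M[F]_m) (r3 : G -> 'M[F]_p)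
    (A : 'M[F]_(m, n)) (B : 'M[F]_(p, m)) :
  is_hom act allF r1 r2 A -> is_hom act allF r2 r3 B -> is_hom act allF r1 r3 (B *m A).
Proof.
move=> /is_homP [_ hA] /is_homP [_ hB]; apply/is_homP; split=> // g.
by rewrite -mulmxA hA mulmxA hB map_mxM mulmxA.
Qed.

Lemma is_hom_inv n m (r1 : G -> 'M[F]_n) (r2 : G -> 'M[F]_m)
    (b : 'M[F]_(m, n)) (b' : 'M[F]_(n, m)) :
  is_hom act allF r1 r2 b -> b *m b' = 1%:M -> b' *m b = 1%:M ->
  is_hom act allF r2 r1 b'.
Proof.
move=> /is_homP [_ hb] bb' b'b; apply/is_homP; split=> // g.
have e : actm g b *m actm g b' = 1%:M by rewrite -map_mxM bb' map_mx1.
by rewrite -[b' *m r2 g]mulmx1 -e !mulmxA -(mulmxA b') -hb mulmxA b'b mul1mx.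
Qed.

Lemma isoF_of_hom n m (r1 : G -> 'M[F]_n) (r2 : G -> 'M[F]_m)
    (b : 'M[F]_(m, n)) (b' : 'M[F]_(n, m)) :
  is_hom act allF r1 r2 b -> b *m b' = 1%:M -> b' *m b = 1%:M -> isoF act r1 r2.
Proof. by move=> hb bb' b'b; exists b, b'; split=> //; exact: is_hom_inv hb bb' b'b. Qed.

Lemma conj_rep n (r : G -> 'M[F]_n) (b b' : 'M[F]_n) :
  is_rep act allF r -> b *m b' = 1%:M ->
  is_rep act allF (fun g => b' *m r g *m actm g b) /\
  is_hom act allF (fun g => b' *m r g *m actm g b) r b.
Proof.
move=> [_ r1 rM] bb'; split; last first.
  by apply/is_homP; split=> // g; rewrite !mulmxA bb' mul1mx.
split=> // [|g h]; first by rewrite r1 mulmx1 actm1 mulmx1C.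
have e : actm g b *m actm g b' = 1%:M by rewrite -map_mxM bb' map_mx1.
rewrite rM -actmM !map_mxM !mulmxA -(mulmxA (b' *m r g) (actm g b)) e mulmx1.
by rewrite actmM.
Qed.

Lemma RepHL_trivial n (r : G -> 'M[F]_n) h : RepHL act H r -> H h -> r h = 1%:M.
Proof.
move=> [[rL _ _] sp] Hh; apply: eq_col_mx => j; rewrite !colE mul1mx.
have [k [c [w [_ wI ->]]]] := sp _ (delta_mx_fixedL j 0).
rewrite mulmx_sumr; apply: eq_bigr => l _; rewrite -scalemxAr; congr (_ *: _).
by have [/fixed_mxP wL wi] := wI l; rewrite -{2}(wi h Hh) /gact wL.
Qed.

Lemma RepHLP n (r : G -> 'M[F]_n) :
  RepHL act H r <-> is_rep act L r /\ forall h, H h -> r h = 1%:M.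
Proof.
split=> [hr | [rr r1]]; first by split=> [|h]; [case: hr | exact: RepHL_trivial].
split=> // v vL; exists n, (fun j => v j 0), (fun j => delta_mx j 0); split.
- by move=> j; exact: vL.
- move=> j; split; first exact: delta_mx_fixedL.
  by move=> h Hh; rewrite /gact r1 // mul1mx actm_delta.
- by rewrite {1}[v]matrix_sum_delta; apply: eq_bigr => j _; rewrite big_ord1.
Qed.

Definition invariant_cols n p (r : G -> 'M[F]_n) (M : 'M[F]_(n, p)) :=
  forall h, H h -> r h *m actm h M = M.

Lemma invariant_colsP n p (r : G -> 'M[F]_n) (M : 'M[F]_(n, p)) :
  invariant_cols r M <-> forall j, is_invariant act allF H r (col j M).
Proof.
have e h j : gact act r h (col j M) = col j (r h *m actm h M).
  by rewrite /gact [col j M]colE map_mxM actm_delta mulmxA -colE.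
split=> [iM j | iM h Hh]; first by split=> // h Hh; rewrite e iM.
by apply: eq_col_mx => j; rewrite -e; exact: (iM j).2.
Qed.

Lemma spanned_invariant_factor n (r : G -> 'M[F]_n) :
  spanned_by_invariants act allF H r -> forall l (X : 'M[F]_(n, l)),
  exists p (M : 'M[F]_(n, p)) (Y : 'M[F]_(p, l)), invariant_cols r M /\ M *m Y = X.
Proof.
move=> sp; elim=> [|l IH] X.
  by exists 0%N, 0, 0; split=> [h _|]; [rewrite map_mx0 mulmx0 | apply/matrixP => a []].
have [k [c [w [_ wI ex]]]] := sp (lsubmx (X : 'M_(n, 1 + l))) (fun _ _ => Logic.I).
have [p [M [Y [iM eM]]]] := IH (rsubmx (X : 'M_(n, 1 + l))).
pose W := \matrix_(a, j) w j a 0 : 'M[F]_(n, k).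
have iW : invariant_cols r W.
  apply/invariant_colsP => j.
  by have -> : col j W = w j by apply/matrixP => a b; rewrite !mxE ord1.
have eW : W *m \col_j c j = lsubmx (X : 'M_(n, 1 + l)).
  rewrite ex; apply/matrixP => a b; rewrite ord1 !mxE summxE; apply: eq_bigr => j _.
  by rewrite !mxE mulrC.
exists (k + p)%N, (row_mx W M), (block_mx (\col_j c j) 0 0 Y); split.
  by move=> h Hh; rewrite map_row_mx mul_mx_row iW // iM.
change (row_mx W M *m block_mx (\col_j c j) 0 0 Y = (X : 'M_(n, 1 + l))).
rewrite mul_row_block !mulmx0 addr0 add0r eW eM.
exact: (hsubmxK (X : 'M_(n, 1 + l))).
Qed.

Lemma spanned_by_invariantsP n (r : G -> 'M[F]_n) :
  spanned_by_invariants act allF H r <->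
  exists p (M : 'M[F]_(n, p)) (Y : 'M[F]_(p, n)), invariant_cols r M /\ M *m Y = 1%:M.
Proof.
split=> [sp | [p [M [Y [/invariant_colsP iM MY]]]] v _]; first exact: spanned_invariant_factor.
exists p, (fun j => (Y *m v) j 0), (fun j => col j M); split=> //.
by rewrite -{1}[v]mul1mx -MY -mulmxA mulmx_sum_col.
Qed.

Lemma actm_rinv_invariant n (r : G -> 'M[F]_n) (b b' : 'M[F]_n) h :
  invariant_cols r b -> b *m b' = 1%:M -> H h -> actm h b' = b' *m r h.
Proof.
move=> ib bb' Hh; have e : b' *m r h *m actm h b = 1%:M by rewrite -mulmxA ib // mulmx1C.
by rewrite -[LHS]mul1mx -e -mulmxA -map_mxM bb' map_mx1 mulmx1.
Qed.

Lemma descent n (r : G -> 'M[F]_n) (b b' : 'M[F]_n) :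
  is_rep act allF r -> b *m b' = 1%:M -> invariant_cols r b ->
  (forall g, fixed_mx (b' *m r g *m actm g b)) ->
  RepHL act H (fun g => b' *m r g *m actm g b) /\
  is_hom act allF (fun g => b' *m r g *m actm g b) r b.
Proof.
move=> rr bb' ib fr; have [[_ r'1 r'M] hb] := conj_rep rr bb'.
split=> //; apply/RepHLP; split; first by split=> // g; apply/fixed_mxP.
by move=> h Hh; rewrite -mulmxA ib // mulmx1C.
Qed.

Lemma ess_image_descent n (r : G -> 'M[F]_n) (b b' : 'M[F]_n) :
  is_rep act allF r -> b *m b' = 1%:M -> invariant_cols r b ->
  (forall g, fixed_mx (b' *m r g *m actm g b)) -> ess_image act H r.
Proof.
move=> rr bb' ib fr; have [hr' hb] := descent rr bb' ib fr.
exists n, (fun g => b' *m r g *m actm g b); split=> //.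
exact: isoF_of_hom hb bb' (mulmx1C bb').
Qed.

Lemma fixed_section n p (r : G -> 'M[F]_n) (M : 'M[F]_(n, p)) (Y : 'M[F]_(p, n)) :
  is_rep act allF r -> invariant_cols r M -> M *m Y = 1%:M ->
  exists Z, fixed_mx Z /\ coord_unit (\det (M *m Z)).
Proof.
move=> rr iM MY; exists (minor_select M^T)^T; split.
  move=> h Hh; have rV := mulmx1C (is_rep_inv h rr).
  rewrite -map_trmx map_minor_select -map_trmx.
  have -> : actm h M = actm h (r h^-1)%g *m M by rewrite -{2}(iM h Hh) mulmxA rV mul1mx.
  rewrite trmx_mul minor_select_mulmx // det_tr.
  exact: coord_unit_det rV.
rewrite -det_tr trmx_mul trmxK; apply/unit_det_minor_select/rank_coord_inj => u Mu.
by rewrite -[u]mul1mx -trmx1 -MY trmx_mul -mulmxA Mu mulmx0.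
Qed.

Lemma RepHL_fixed m (tau : G -> 'M[F]_m) g : RepHL act H tau -> fixed_mx (tau g).
Proof. by case=> [[tL _ _] _]; exact/fixed_mxP. Qed.

Lemma RepHL_unit n : RepHL act H (fun _ : G => (1%:M : 'M[F]_n)).
Proof.
apply/RepHLP; split=> //; split=> [g | // | g h]; last by rewrite map_mx1 mulmx1.
by apply/fixed_mxP => h _; rewrite map_mx1.
Qed.

Lemma RepHL_tens n m (rho : G -> 'M[F]_n) (tau : G -> 'M[F]_m) :
  RepHL act H rho -> RepHL act H tau -> RepHL act H (fun g => rho g *t tau g).
Proof.
move=> hr ht; have [[_ r1 rM] rH] := proj1 (RepHLP rho) hr.
have [[_ t1 tM] tH] := proj1 (RepHLP tau) ht.
apply/RepHLP; split; last by move=> h Hh; rewrite rH // tH // tensmx11.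
split=> [g | | g h]; last by rewrite rM tM -tensmx_mul map_mxT.
  by apply/fixed_mxP => h Hh; rewrite map_mxT !(RepHL_fixed g).
by rewrite r1 t1 tensmx11.
Qed.

Lemma is_hom_fixedL n m (rho : G -> 'M[F]_n) (tau : G -> 'M[F]_m) (B : 'M[F]_(m, n)) :
  RepHL act H rho -> RepHL act H tau -> is_hom act allF rho tau B ->
  is_hom act L rho tau B.
Proof.
move=> hr ht /is_homP [_ hB]; apply/is_homP; split=> //; apply/fixed_mxP => h Hh.
by move: (hB h); rewrite (RepHL_trivial hr Hh) (RepHL_trivial ht Hh) mulmx1 mul1mx.
Qed.

Lemma is_invariant_RepHL m (tau : G -> 'M[F]_m) (v : 'cV[F]_m) :
  RepHL act H tau -> is_invariant act allF H tau v <-> mx_in L v.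
Proof.
move=> ht; split=> [[_ iv] | /fixed_mxP fv].
  by apply/fixed_mxP => h Hh; rewrite -{2}(iv h Hh) /gact (RepHL_trivial ht Hh) mul1mx.
by split=> // h Hh; rewrite /gact (RepHL_trivial ht Hh) mul1mx fv.
Qed.

Lemma spanned_of_ess_image n (rho : G -> 'M[F]_n) :
  ess_image act H rho -> spanned_by_invariants act allF H rho.
Proof.
case=> m [tau [ht [A [B [/is_homP [_ hA] _ AB _]]]]].
apply/spanned_by_invariantsP; exists m, A, B; split=> // h Hh.
by rewrite -hA /ext_obj (RepHL_trivial ht Hh) mulmx1.
Qed.

Section NormalSubgroup.
Hypothesis H_normal : forall g h, H h -> H (g * h * g^-1)%g.

Lemma conj_fixed_normal n (r : G -> 'M[F]_n) (b b' : 'M[F]_n) g :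
  is_rep act allF r -> invariant_cols r b -> b *m b' = 1%:M ->
  fixed_mx (b' *m r g *m actm g b).
Proof.
move=> [_ _ rM] ib bb' h Hh.
have Hh' : H (g^-1 * h * g)%g by have := H_normal g^-1 Hh; rewrite invgK.
rewrite !map_mxM (actm_rinv_invariant ib bb' Hh) -!mulmxA; congr (b' *m _).
rewrite mulmxA -rM actmM.
have -> : (h * g = g * (g^-1 * h * g))%g by rewrite !mulgA mulgV mul1g.
by rewrite rM -actmM -mulmxA -map_mxM ib.
Qed.

Lemma invariant_descent n (rho : G -> 'M[F]_n) :
  is_rep act allF rho -> spanned_by_invariants act allF H rho ->
  exists m (b : 'M[F]_(n, m)) (rho' : G -> 'M[F]_m) (b' : 'M[F]_(m, n)),
    [/\ invariant_basis act H rho b, RepHL act H rho',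
        is_hom act allF (ext_obj rho') rho b, b *m b' = 1%:M & b' *m b = 1%:M].
Proof.
move=> rr /spanned_by_invariantsP [p [M [Y [iM MY]]]].
have [Z [fZ /mx_rinv_of_unit_det [b' bb']]] := fixed_section rr iM MY.
have ib : invariant_cols rho (M *m Z) by move=> h Hh; rewrite map_mxM mulmxA iM // fZ.
have [hr' hb] := descent rr bb' ib (fun g => conj_fixed_normal g rr ib bb').
exists n, (M *m Z), (fun g => b' *m rho g *m actm g (M *m Z)), b'.
split=> //; last exact: mulmx1C.
split; first exact/invariant_colsP.
move=> v [_ iv]; exists (b' *m v); split=> [|c [_ ->]].
  split; last by rewrite mulmxA bb' mul1mx.
  apply/fixed_mxP => h Hh; rewrite map_mxM (actm_rinv_invariant ib bb' Hh) -mulmxA.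
  by move: (iv h Hh); rewrite /gact => ->.
by rewrite mulmxA mulmx1C // mul1mx.
Qed.

Lemma ess_imageP n (rho : G -> 'M[F]_n) : is_rep act allF rho ->
  ess_image act H rho <-> spanned_by_invariants act allF H rho.
Proof.
move=> rr; split; first exact: spanned_of_ess_image.
move=> /(invariant_descent rr) [m [b [r' [b' [_ hr' hb bb' b'b]]]]].
by exists m, r'; split=> //; exact: isoF_of_hom hb bb' b'b.
Qed.

End NormalSubgroup.

Section StableFixedSubring.
Hypothesis stabL : forall g x, fixedL act H x -> fixedL act H (act g x).

Lemma fixed_mx_act g m n (A : 'M[F]_(m, n)) : fixed_mx A -> fixed_mx (actm g A).
Proof. by move=> /fixed_mxP fA; apply/fixed_mxP => a b; rewrite mxE; exact: stabL. Qed.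

Lemma fixed_conj_RepHL k m (tau : G -> 'M[F]_m) (U : 'M[F]_(k, m)) (V : 'M[F]_(m, k)) g :
  RepHL act H tau -> fixed_mx U -> fixed_mx V -> fixed_mx (U *m tau g *m actm g V).
Proof.
move=> ht fU fV; apply: fixed_mxM; last exact: fixed_mx_act.
by apply: fixed_mxM => //; exact: RepHL_fixed.
Qed.

Lemma ess_image_sub n k (rho : G -> 'M[F]_n) (sig : G -> 'M[F]_k) (A : 'M[F]_(n, k)) :
  ess_image act H rho -> is_rep act allF sig -> is_hom act allF sig rho A ->
  (forall u : 'cV[F]_k, A *m u = 0 -> u = 0) -> ess_image act H sig.
Proof.
move=> [m [tau [ht [A0 [B0 [_ hB0 AB0 _]]]]]] rs hA injA.
set A' := B0 *m A.
have /is_homP [_ hA'] : is_hom act allF sig tau A' := is_hom_comp hA hB0.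
have actA' h : H h -> actm h A' = A' *m sig h.
  by move=> Hh; rewrite hA' /ext_obj (RepHL_trivial ht Hh) mul1mx.
set S := minor_select A'.
have fS : fixed_mx S.
  move=> h Hh; rewrite map_minor_select actA' // minor_select_mulmx //.
  exact: coord_unit_det (is_rep_inv h rs).
have rk : forall i, \rank (pm i A') = k.
  apply: rank_coord_inj => u A'u; apply: injA.
  by rewrite -[A]mul1mx -AB0 -!mulmxA [B0 *m _]mulmxA -/A' A'u !mulmx0.
have [b Db] := mx_rinv_of_unit_det (unit_det_minor_select rk).
have bD := mulmx1C Db.
have ib : invariant_cols sig b.
  move=> h Hh; have hD : actm h (S *m A') = S *m A' *m sig h.
    by rewrite map_mxM fS // actA' // mulmxA.
  have := congr1 (map_mx (act h)) Db; rewrite map_mxM hD map_mx1 => e.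
  by rewrite -[LHS]mul1mx -bD -mulmxA [_ *m (sig h *m _)]mulmxA e mulmx1.
apply: (ess_image_descent rs bD ib) => g.
rewrite -(mulmxA S) hA' mulmxA -mulmxA -map_mxM.
apply: fixed_conj_RepHL => // h Hh.
by rewrite map_mxM actA' // -mulmxA ib.
Qed.

Lemma ess_image_quot n k (rho : G -> 'M[F]_n) (sig : G -> 'M[F]_k) (B : 'M[F]_(k, n)) :
  ess_image act H rho -> is_rep act allF sig -> is_hom act allF rho sig B ->
  (forall q : 'cV[F]_k, exists v : 'cV[F]_n, q = B *m v) -> ess_image act H sig.
Proof.
move=> [m [tau [ht [A0 [B0 [hA0 _ AB0 _]]]]]] rs hB surB.
set B' := B *m A0.
have /is_homP [_ hB'] : is_hom act allF tau sig B' := is_hom_comp hA0 hB.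
have iB' : invariant_cols sig B'.
  by move=> h Hh; rewrite -hB' /ext_obj (RepHL_trivial ht Hh) mulmx1.
have [Y B'Y] : exists Y, B' *m Y = 1%:M.
  have /fin_all_exists [v hv] := fun j => surB (delta_mx j 0).
  exists (B0 *m \matrix_(a, j) v j a 0); rewrite mulmxA -(mulmxA B) AB0 mulmx1.
  apply: eq_col_mx => j; rewrite [LHS]colE -mulmxA -colE [RHS]colE mul1mx (hv j).
  by congr (_ *m _); apply/matrixP => a b; rewrite !mxE ord1.
have [Z [fZ /mx_rinv_of_unit_det [b' bb']]] := fixed_section rs iB' B'Y.
have ib : invariant_cols sig (B' *m Z).
  by move=> h Hh; rewrite map_mxM mulmxA iB' // fZ.
apply: (ess_image_descent rs bb' ib) => g.
have -> : b' *m sig g *m actm g (B' *m Z) = b' *m B' *m tau g *m actm g Z.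
  by rewrite map_mxM mulmxA -(mulmxA b') -hB' !mulmxA.
apply: fixed_conj_RepHL => // h Hh.
by rewrite map_mxM (actm_rinv_invariant ib bb' Hh) -mulmxA iB'.
Qed.

End StableFixedSubring.

End Action.
End ProductOfFields.

Theorem corollary3p9
  (* F = prod_i K i : a commutative ring together with ring maps pi i : F -> K i
     into fields K i, inducing a bijection F ~= prod_i K i *)
  (F : comPzRingType) (I : Type) (K : I -> fieldType)
  (pi : forall i : I, {rmorphism F -> K i})
  (pi_inj : forall x : F, (forall i, pi i x = 0) -> x = 0)
  (pi_surj : forall y : (forall i, K i), exists x : F, forall i, pi i x = y i)
  (* G a group acting on F by ring automorphisms *)
  (G : groupType) (act : G -> {rmorphism F -> F})
  (act1 : forall x, act 1%g x = x)
  (actM : forall g h x, act (g * h)%g x = act g (act h x))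
  (* G acts transitively on the principal (coordinate) idempotents of F *)
  (transitive : forall e e' : F,
      (exists i, pi i e = 1 /\ forall j, j <> i -> pi j e = 0) ->
      (exists i, pi i e' = 1 /\ forall j, j <> i -> pi j e' = 0) ->
      exists g, act g e = e')
  (* H a subgroup of G *)
  (H : G -> Prop) (H1 : H 1%g)
  (HM : forall g h, H g -> H h -> H (g * h)%g)
  (HV : forall g, H g -> H (g^-1)%g)
  (* G stabilises L = F^H *)
  (stabL : forall g x, fixedL act H x -> fixedL act H (act g x)) :
  (* (1) F (x)_L - : Rep^H_L(G) -> Rep_F(G) is exact, monoidal, fully faithful *)
  ((* exact *)
   (forall n1 n2 n3 (r1 : G -> 'M[F]_n1) (r2 : G -> 'M[F]_n2)
       (r3 : G -> 'M[F]_n3) (A : 'M[F]_(n2, n1)) (B : 'M[F]_(n3, n2)),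
      RepHL act H r1 -> RepHL act H r2 -> RepHL act H r3 ->
      is_hom act (fixedL act H) r1 r2 A -> is_hom act (fixedL act H) r2 r3 B ->
      exact_at (fixedL act H) A B ->
      exact_at (@allF F) (ext_hom A) (ext_hom B))
   /\ (* monoidal: Rep^H_L(G) is a monoidal subcategory (unit, tensor products)
         and F (x)_L - sends unit and tensor products to unit and tensor products *)
   (RepHL act H (fun _ : G => (1%:M : 'M[F]_1))
    /\ ext_obj (fun _ : G => (1%:M : 'M[F]_1)) = (fun _ : G => 1%:M)
    /\ forall n m (rho : G -> 'M[F]_n) (tau : G -> 'M[F]_m),
         RepHL act H rho -> RepHL act H tau ->
         RepHL act H (fun g => rho g *t tau g)
         /\ ext_obj (fun g => rho g *t tau g)
            = (fun g => ext_obj rho g *t ext_obj tau g))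
   /\ (* fully faithful *)
   (forall n m (rho : G -> 'M[F]_n) (tau : G -> 'M[F]_m),
      RepHL act H rho -> RepHL act H tau ->
      (forall A A' : 'M[F]_(m, n), is_hom act (fixedL act H) rho tau A ->
          is_hom act (fixedL act H) rho tau A' -> ext_hom A = ext_hom A' -> A = A')
      /\ (forall B : 'M[F]_(m, n),
            is_hom act (@allF F) (ext_obj rho) (ext_obj tau) B ->
            exists A, is_hom act (fixedL act H) rho tau A /\ ext_hom A = B)))
  /\
  (* (2) H normal: essential image = {V | F . V^H = V}, and (-)^H is a
         quasi-inverse on it *)
  ((forall g h, H h -> H (g * h * g^-1)%g) ->
   (forall n (rho : G -> 'M[F]_n), RepF act rho ->
      (ess_image act H rho <-> spanned_by_invariants act (@allF F) H rho))
   /\ (* counit F (x)_L V^H -> V : V^H is free of finite rank over L, lies in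
         Rep^H_L(G) (with the coordinate cocycle rho'), and the multiplication
         map F (x)_L V^H -> V (matrix b) is an isomorphism in Rep_F(G) *)
   (forall n (rho : G -> 'M[F]_n), RepF act rho ->
      spanned_by_invariants act (@allF F) H rho ->
      exists m (b : 'M[F]_(n, m)) (rho' : G -> 'M[F]_m) (b' : 'M[F]_(m, n)),
        [/\ invariant_basis act H rho b, RepHL act H rho',
            is_hom act (@allF F) (ext_obj rho') rho b,
            b *m b' = 1%:M & b' *m b = 1%:M])
   /\ (* unit W -> (F (x)_L W)^H is an isomorphism *)
   (forall m (tau : G -> 'M[F]_m), RepHL act H tau ->
      forall v : 'cV[F]_m,
        is_invariant act (@allF F) H (ext_obj tau) v <-> mx_in (fixedL act H) v))
  /\
  (* (3) the essential image is closed under subobjects and quotients in Rep_F(G) *)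
  (forall n (rho : G -> 'M[F]_n), RepF act rho -> ess_image act H rho ->
     (forall k (sig : G -> 'M[F]_k) (A : 'M[F]_(n, k)),
        RepF act sig -> is_hom act (@allF F) sig rho A ->
        (forall u : 'cV[F]_k, A *m u = 0 -> u = 0) -> ess_image act H sig)
     /\ (forall k (sig : G -> 'M[F]_k) (B : 'M[F]_(k, n)),
        RepF act sig -> is_hom act (@allF F) rho sig B ->
        (forall q : 'cV[F]_k, exists v : 'cV[F]_n, q = B *m v) ->
        ess_image act H sig)).
Proof.
split; [split; [|split] | split].
- move=> n1 n2 n3 r1 r2 r3 A B _ _ _ [AL _] [BL _] ex.
  exact (exact_at_ext pi_inj pi_surj AL BL ex).
- split; first exact: RepHL_unit.
  by split=> // n m rho tau hr ht; split=> //; exact: RepHL_tens.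
- move=> n m rho tau hr ht; split=> // B hB.
  by exists B; split=> //; exact: is_hom_fixedL.
- move=> normal; split; [|split].
  + move=> n rho rr; exact (ess_imageP pi_inj pi_surj act1 actM normal rr).
  + move=> n rho rr; exact (invariant_descent pi_inj pi_surj act1 actM normal rr).
  + move=> m tau ht v; exact (is_invariant_RepHL v ht).
- move=> n rho _ ei; split=> [k sig A rs hA injA | k sig B rs hB surB].
  + exact (ess_image_sub pi_inj pi_surj act1 actM stabL ei rs hA injA).
  + exact (ess_image_quot pi_inj pi_surj act1 actM stabL ei rs hB surB).
Qed.
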